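(* Let $F:\mathbf{Perf}(A)\to\mathbf{Perf}(A)$ be a fully faithful $k$-linear functor satisfying: $F\circ[1]=[1]\circ F$; $F(X_i[\alpha])=X_i[\alpha]$ for all $i\ge1,\alpha\in\mathbb{Z}$; (C1) $k^i_{i[0]}=1$ for all $i\ge1$; and (C2) $k^{i-1}_{i[0]}=1$ for all $i\ge2$. Put $\lambda=k^2_{1[1]}$. Then for all $i,j\ge1$ and $\alpha\in\mathbb{Z}$ with $-j<\alpha\le\min\{0,i-j\}$ or $\max\{0,i-j\}\le\alpha<i$, one has $k^i_{j[\alpha]}=\lambda^\alpha$. In particular the action of $F$ on morphisms between indecomposable objects is completely determined by $\lambda$.
   Context: $k$ is a field, $A=k[\epsilon]/(\epsilon^2)$, $\mathbf{Perf}(A)$ the homotopy category of bounded complexes of finitely generated free $A$-modules. For $i\ge1$, $X_i$ is the complex with $A$ in degrees $-i,\dots,-1$ and differentials multiplication by $\epsilon$; $X_j[\alpha]$ is modelled as the complex with $A$ in degrees $-j-\alpha,\dots,-1-\alpha$ and differentials $\epsilon$. For $\max\{0,i-j\}\le\alpha<i$ let $1^i_{j[\alpha]}$ be the class of the chain map $X_i\to X_j[\alpha]$ that is the identity in degrees where both are nonzero and $0$ elsewhere; for $-j<\alpha\le\min\{0,i-j\}$ let $\epsilon^i_{j[\alpha]}$ be the class of the chain map that is multiplication by $\epsilon$ in degree $-1$ and $0$ elsewhere. $\mathrm{Hom}(X_i,X_j[\alpha])$ is spanned by the generator when exactly one of these exists; for $i=j$, $\alpha=0$ it has basis $\mathrm{id},\epsilon^i_{i[0]}$.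 The coefficients $k^i_{j[\alpha]}\in k$ of $F$ are defined by: $F(g)=k^i_{j[\alpha]}g$ for $g$ the generator $1^i_{j[\alpha]}$ or $\epsilon^i_{j[\alpha]}$ when $(i-j,\alpha)\ne(0,0)$, and $F(a\,\mathrm{id}+b\,\epsilon^i_{i[0]})=a\,\mathrm{id}+k^i_{i[0]}b\,\epsilon^i_{i[0]}$. *)

From HB Require Import structures.
From mathcomp Require Import all_boot all_order all_algebra.
Unset Printing Implicit Defensive.
Import Order.TTheory GRing.Theory Num.Theory.
Local Open Scope ring_scope.

(* The ring A = k[eps]/(eps^2), elements a + b eps represented as (a, b). *)
Section DualNumbers.
Variable k : fieldType.
Definition dual := (k * k)%type.
Definition zeroA : dual := (0, 0).
Definition oneA : dual := (1, 0).
Definition epsA : dual := (0, 1).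
Definition addA (x y : dual) : dual := (x.1 + y.1, x.2 + y.2).
Definition oppA (x : dual) : dual := (- x.1, - x.2).
Definition mulA (x y : dual) : dual := (x.1 * y.1, x.1 * y.2 + x.2 * y.1).
Definition scaleA (c : k) (x : dual) : dual := (c * x.1, c * x.2).
End DualNumbers.
Arguments addA {k}. Arguments oppA {k}. Arguments mulA {k}. Arguments scaleA {k}.

(* The complexes X_i[a] : A in degrees -i-a, ..., -1-a, differentials eps. *)
(* A morphism of graded modules X -> Y between such complexes is given by *)
(* its components f n : X^n = A -> Y^n = A, i.e. elements of A (A-linear  *)
(* endomorphisms of A are multiplications).                                *)

Definition inX (i : nat) (a : int) (n : int) : bool :=
  (- (i%:Z) - a <= n) && (n <= -1 - a).

Definition dX (k : fieldType) (i : nat) (a : int) (n : int) : dual k :=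
  if inX i a n && inX i a (n + 1) then epsA k else zeroA k.

Definition is_chain (k : fieldType) (i : nat) (a : int) (j : nat) (b : int)
    (f : int -> dual k) : Prop :=
  (forall n, ~~ (inX i a n && inX j b n) -> f n = zeroA k) /\
  (forall n, mulA (dX k j b n) (f n) = mulA (f (n + 1)) (dX k i a n)).

Definition homotopic (k : fieldType) (i : nat) (a : int) (j : nat) (b : int)
    (f g : int -> dual k) : Prop :=
  exists h : int -> dual k,
    (forall n, ~~ (inX i a n && inX j b (n - 1)) -> h n = zeroA k) /\
    (forall n, addA (f n) (oppA (g n)) =
               addA (mulA (dX k j b (n - 1)) (h n)) (mulA (h (n + 1)) (dX k i a n))).

Definition compM (k : fieldType) (g f : int -> dual k) : int -> dual k :=
  fun n => mulA (g n) (f n).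
Definition idM (k : fieldType) (i : nat) (a : int) : int -> dual k :=
  fun n => if inX i a n then oneA k else zeroA k.
Definition scaleM (k : fieldType) (c : k) (f : int -> dual k) : int -> dual k :=
  fun n => scaleA c (f n).
Definition addM (k : fieldType) (f g : int -> dual k) : int -> dual k :=
  fun n => addA (f n) (g n).
(* f : X_i[a] -> X_j[b]  gives  f[1] : X_i[a+1] -> X_j[b+1] *)
Definition shiftM (k : fieldType) (f : int -> dual k) : int -> dual k :=
  fun n => f (n + 1).

Arguments compM {k}. Arguments scaleM {k}. Arguments addM {k}. Arguments shiftM {k}.

(* A functor F on the full subcategory of Perf(A) on the objects X_i[a]
   (i >= 1), fixing every object:  F i a j b f  is F applied to a
   representative f of a morphism X_i[a] -> X_j[b]. *)
Definition FunType (k : fieldType) :=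
  nat -> int -> nat -> int -> (int -> dual k) -> (int -> dual k).

Definition good_functor (k : fieldType) (F : FunType k) : Prop :=
  (forall i a j b f, (0 < i)%N -> (0 < j)%N -> is_chain k i a j b f ->
      is_chain k i a j b (F i a j b f)) /\
  (forall i a j b f g, (0 < i)%N -> (0 < j)%N ->
      is_chain k i a j b f -> is_chain k i a j b g ->
      homotopic k i a j b f g -> homotopic k i a j b (F i a j b f) (F i a j b g)) /\
  (forall i a j b (c : k) f g, (0 < i)%N -> (0 < j)%N ->
      is_chain k i a j b f -> is_chain k i a j b g ->
      homotopic k i a j b (F i a j b (addM (scaleM c f) g))
                          (addM (scaleM c (F i a j b f)) (F i a j b g))) /\
  (forall i a, (0 < i)%N -> homotopic k i a i a (F i a i a (idM k i a)) (idM k i a)) /\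
  (forall i a j b l c f g, (0 < i)%N -> (0 < j)%N -> (0 < l)%N ->
      is_chain k i a j b f -> is_chain k j b l c g ->
      homotopic k i a l c (F i a l c (compM g f))
                          (compM (F j b l c g) (F i a j b f))) /\
  (forall i a j b f, (0 < i)%N -> (0 < j)%N -> is_chain k i a j b f ->
      homotopic k i (a + 1) j (b + 1) (F i (a + 1) j (b + 1) (shiftM f))
                                      (shiftM (F i a j b f))) /\
  (forall i a j b f g, (0 < i)%N -> (0 < j)%N ->
      is_chain k i a j b f -> is_chain k i a j b g ->
      homotopic k i a j b (F i a j b f) (F i a j b g) -> homotopic k i a j b f g) /\
  (forall i a j b g, (0 < i)%N -> (0 < j)%N -> is_chain k i a j b g ->
      exists f, is_chain k i a j b f /\ homotopic k i a j b (F i a j b f) g).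

Definition one_range (i j : nat) (a : int) : bool :=
  (Num.max 0 (i%:Z - j%:Z) <= a) && (a < i%:Z).
Definition eps_range (i j : nat) (a : int) : bool :=
  (- (j%:Z) < a) && (a <= Num.min 0 (i%:Z - j%:Z)).

Definition one_gen (k : fieldType) (i j : nat) (a : int) : int -> dual k :=
  fun n => if inX i 0 n && inX j a n then oneA k else zeroA k.
Definition eps_gen (k : fieldType) (i j : nat) (a : int) : int -> dual k :=
  fun n => if n == -1 then epsA k else zeroA k.

(* kc i j a = k^i_{j[a]} are the coefficients of F:
   F(g) = k^i_{j[a]} g for the generator g when (i-j,a) <> (0,0), and
   F(eps^i_{i[0]}) = k^i_{i[0]} eps^i_{i[0]} (which, with F(id) = id and
   linearity, is F(a id + b eps) = a id + k^i_{i[0]} b eps). *)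
Definition coeffs_of (k : fieldType) (F : FunType k) (kc : nat -> nat -> int -> k) : Prop :=
  (forall i j a, (0 < i)%N -> (0 < j)%N -> one_range i j a ->
      ~ (i = j /\ a = 0) ->
      homotopic k i 0 j a (F i 0 j a (one_gen k i j a)) (scaleM (kc i j a) (one_gen k i j a))) /\
  (forall i j a, (0 < i)%N -> (0 < j)%N -> eps_range i j a ->
      homotopic k i 0 j a (F i 0 j a (eps_gen k i j a)) (scaleM (kc i j a) (eps_gen k i j a))).

From Pilot Require Import Defs.
From HB Require Import structures.
From mathcomp Require Import all_boot all_order all_algebra zify ring.
From Stdlib Require Import FunctionalExtensionality.
Import Defs.
Set Implicit Arguments.
Unset Strict Implicit.
Import Order.TTheory GRing.Theory Num.Theory.
Local Open Scope ring_scope.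

(* The whole argument rests on one multiplicativity principle.  If a
   generator gen : X_i -> X_l[a+b] factors as  gen = g[a] o f  through
   generators f : X_i -> X_j[a] and g : X_j -> X_l[b], then functoriality
   of F and F o [1] = [1] o F give  F(gen) ~ (k(g) * k(f)) gen, while by
   definition F(gen) ~ k(gen) gen; since a nonzero multiple of a generator
   is never null-homotopic, k(gen) = k(g) * k(f).

   From these follow the two factorization rules
   1 o 1 = 1 and 1 o eps = eps.  The theorem is then pure bookkeeping:
   (C2) propagates to k^i_{j[0]} = 1 for i < j, the coefficients of the
   maps 1^{d+2}_{d+1[1]} are all equal to lambda, the one-range follows by
   induction on the shift, and the eps-range by inverting  1 o eps = eps. *)

Definition shiftZ {k : fieldType} (z : int) (f : int -> dual k) : int -> dual k :=
  fun n => f (n + z).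

Lemma shiftZ0 (k : fieldType) (f : int -> dual k) : shiftZ 0 f = f.
Proof. by apply: functional_extensionality => n; rewrite /shiftZ addr0. Qed.

Lemma shiftZ_add (k : fieldType) (z1 z2 : int) (f : int -> dual k) :
  shiftZ (z1 + z2) f = shiftZ z1 (shiftZ z2 f).
Proof. by apply: functional_extensionality => n; rewrite /shiftZ addrA. Qed.

Lemma dual_ext (k : fieldType) (x y : dual k) : x.1 = y.1 -> x.2 = y.2 -> x = y.
Proof. by case: x => ? ?; case: y => ? ? /= -> ->. Qed.

Ltac dual_ring :=
  rewrite /mulA /addA /oppA /scaleA /epsA /oneA /zeroA; apply: dual_ext => /=; ring.

Lemma mulAA (k : fieldType) (x y z : dual k) : mulA x (mulA y z) = mulA (mulA x y) z.
Proof. by dual_ring. Qed.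
Lemma mulAZr (k : fieldType) c (x y : dual k) : mulA x (scaleA c y) = scaleA c (mulA x y).
Proof. by dual_ring. Qed.
Lemma mulAZl (k : fieldType) c (x y : dual k) : mulA (scaleA c x) y = scaleA c (mulA x y).
Proof. by dual_ring. Qed.
Lemma mulA0r (k : fieldType) (x : dual k) : mulA x (zeroA k) = zeroA k.
Proof. by dual_ring. Qed.
Lemma mulA0l (k : fieldType) (x : dual k) : mulA (zeroA k) x = zeroA k.
Proof. by dual_ring. Qed.
Lemma scaleA0 (k : fieldType) c : scaleA c (zeroA k) = zeroA k.
Proof. by dual_ring. Qed.
Lemma scaleAA (k : fieldType) c d (x : dual k) : scaleA c (scaleA d x) = scaleA (c * d) x.
Proof. by dual_ring. Qed.

Lemma subA_eq (k : fieldType) (x y z : dual k) : addA x (oppA y) = z <-> x = addA y z.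
Proof. by split=> [<-|->]; dual_ring. Qed.

Lemma dX1 (k : fieldType) i a n : (dX k i a n).1 = 0.
Proof. by rewrite /dX; case: ifP. Qed.

Lemma inX_shift i a z n : inX i (a + z) n = inX i a (n + z).
Proof. by rewrite /inX; apply/idP/idP => /andP [H1 H2]; apply/andP; split; lia. Qed.

Lemma dX_shift (k : fieldType) i a z n : dX k i (a + z) n = dX k i a (n + z).
Proof. by rewrite /dX !inX_shift addrAC. Qed.

Lemma chain_shift (k : fieldType) i a j b z (f : int -> dual k) :
  is_chain k i a j b f -> is_chain k i (a + z) j (b + z) (shiftZ z f).
Proof.
case=> Hs He; split; first by move=> n H; rewrite /shiftZ Hs // -!inX_shift.
by move=> n; rewrite /shiftZ !dX_shift He addrAC.
Qed.

Lemma chain_scale (k : fieldType) i a j b c (f : int -> dual k) :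
  is_chain k i a j b f -> is_chain k i a j b (scaleM c f).
Proof.
case=> Hs He; split; first by move=> n H; rewrite /scaleM Hs // scaleA0.
by move=> n; rewrite /scaleM mulAZr mulAZl He.
Qed.

Lemma htp_refl (k : fieldType) i a j b (f : int -> dual k) : homotopic k i a j b f f.
Proof. by exists (fun _ => zeroA k); split=> // n; dual_ring. Qed.

Lemma htp_sym (k : fieldType) i a j b (f g : int -> dual k) :
  homotopic k i a j b f g -> homotopic k i a j b g f.
Proof.
case=> h [Hs He]; exists (fun n => oppA (h n)); split.
  by move=> n /Hs ->; dual_ring.
by move=> n; move/subA_eq: (He n) => ->; dual_ring.
Qed.

Lemma htp_trans (k : fieldType) i a j b (f g l : int -> dual k) :
  homotopic k i a j b f g -> homotopic k i a j b g l -> homotopic k i a j b f l.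
Proof.
case=> h [Hs He]; case=> h' [Hs' He']; exists (fun n => addA (h n) (h' n)); split.
  by move=> n H; rewrite (Hs _ H) (Hs' _ H); dual_ring.
by move=> n; move/subA_eq: (He n) => ->; move/subA_eq: (He' n) => ->; dual_ring.
Qed.

Lemma htp_shift (k : fieldType) i a j b z (f g : int -> dual k) :
  homotopic k i a j b f g -> homotopic k i (a + z) j (b + z) (shiftZ z f) (shiftZ z g).
Proof.
case=> h [Hs He]; exists (shiftZ z h); split.
  by move=> n H; rewrite /shiftZ Hs //; move: H; rewrite !inX_shift addrAC.
by move=> n; rewrite /shiftZ !dX_shift He [n - 1 + z]addrAC [n + 1 + z]addrAC.
Qed.

Lemma htp_compl (k : fieldType) i a j b l c (f f' g : int -> dual k) :
  is_chain k j b l c g -> homotopic k i a j b f f' ->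
  homotopic k i a l c (compM g f) (compM g f').
Proof.
case=> Hsg Heg; case=> h [Hs He]; exists (fun n => mulA (g (n - 1)) (h n)); split.
  move=> n; rewrite negb_and => /orP [H|H]; first by rewrite Hs ?mulA0r // (negbTE H).
  case E: (inX j b (n - 1)); last by rewrite Hsg ?mulA0l // E.
  by rewrite Hsg ?mulA0l // (negbTE H) andbF.
move=> n; rewrite /compM subA_eq; move/subA_eq: (He n) => ->.
by rewrite mulAA Heg subrK addrK; dual_ring.
Qed.

Lemma htp_compr (k : fieldType) i a j b l c (f g g' : int -> dual k) :
  is_chain k i a j b f -> homotopic k j b l c g g' ->
  homotopic k i a l c (compM g f) (compM g' f).
Proof.
case=> Hsf Hef; case=> h [Hs He]; exists (fun n => mulA (h n) (f n)); split.
  move=> n; rewrite negb_and => /orP [H|H]; first by rewrite Hsf ?mulA0r // (negbTE H).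
  case E: (inX j b n); last by rewrite Hsf ?mulA0r // E andbF.
  by rewrite Hs ?mulA0l // E (negbTE H).
move=> n; rewrite /compM subA_eq; move/subA_eq: (He n) => ->.
by rewrite -mulAA -Hef; dual_ring.
Qed.

Ltac case_gen := repeat (case: ifP => ?); rewrite /mulA /epsA /oneA /zeroA /=;
  first [ by apply: dual_ext => /=; ring | exfalso; lia ].

Lemma chain_one (k : fieldType) i j a : (0 < i)%N -> (0 < j)%N -> one_range i j a ->
  is_chain k i 0 j a (one_gen k i j a).
Proof.
move=> Hi Hj; rewrite /one_range => Hr; split; first by rewrite /one_gen => n /negbTE ->.
by move=> n; rewrite /one_gen /dX /inX; case_gen.
Qed.

Lemma chain_eps (k : fieldType) i j a : (0 < i)%N -> (0 < j)%N -> eps_range i j a ->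
  is_chain k i 0 j a (eps_gen k i j a).
Proof.
move=> Hi Hj; rewrite /eps_range => Hr; split.
  by move=> n; rewrite /eps_gen; case: eqP => // -> /negP []; rewrite /inX; lia.
by move=> n; rewrite /eps_gen /dX /inX; case_gen.
Qed.

Lemma comp_one_one (k : fieldType) i j l a b :
  (0 < i)%N -> (0 < j)%N -> (0 < l)%N ->
  one_range i j a -> one_range j l b -> one_range i l (a + b) ->
  compM (shiftZ a (one_gen k j l b)) (one_gen k i j a) = one_gen k i l (a + b).
Proof.
move=> Hi Hj Hl; rewrite /one_range => H1 H2 H3.
by apply: functional_extensionality => n; rewrite /compM /shiftZ /one_gen /inX; case_gen.
Qed.

Lemma comp_one_eps (k : fieldType) i j a :
  (0 < i)%N -> (0 < j)%N -> eps_range i j a ->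
  compM (shiftZ a (one_gen k j i (- a))) (eps_gen k i j a) = eps_gen k i i 0.
Proof.
move=> Hi Hj; rewrite /eps_range => H.
by apply: functional_extensionality => n;
  rewrite /compM /shiftZ /one_gen /eps_gen /inX; case_gen.
Qed.

(* Non-degeneracy: the class of c 1^i_{l[a]} determines c.  In degree
   -1-a the homotopy terms have no unit part, since d has none. *)
Lemma one_gen_scale_inj (k : fieldType) i l a c c' :
  (0 < i)%N -> (0 < l)%N -> one_range i l a ->
  homotopic k i 0 l a (scaleM c (one_gen k i l a)) (scaleM c' (one_gen k i l a)) ->
  c = c'.
Proof.
move=> Hi Hl Hr [h [_ He]]; move: (He (-1 - a)) => /(congr1 fst).
rewrite /scaleM /one_gen /=.
have -> : inX i 0 (-1 - a) && inX l a (-1 - a) by move: Hr; rewrite /one_range /inX; lia.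
rewrite !dX1 /= !mulr1 !mul0r mulr0 addr0 => /eqP.
by rewrite subr_eq0 => /eqP.
Qed.

(* Non-degeneracy of eps^i_{i[0]}: a homotopy h from c eps to c' eps has
   (h n).1 = 0 in every degree -i <= n <= -1 (induction upwards from the
   bottom degree), and the equation in degree -1 then forces c = c'. *)
Lemma eps_gen_scale_inj (k : fieldType) i c c' : (0 < i)%N ->
  homotopic k i 0 i 0 (scaleM c (eps_gen k i i 0)) (scaleM c' (eps_gen k i i 0)) ->
  c = c'.
Proof.
move=> Hi [h [Hs He]].
have unit0 : forall m : nat, (m < i)%N -> (h (- i%:Z + m%:Z)).1 = 0.
  elim=> [|m IH] Hm; first by rewrite Hs //; apply/negP; rewrite /inX; lia.
  move: (He (- i%:Z + m%:Z)) => /(congr1 snd); rewrite /scaleM /eps_gen /=.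
  have -> : (- i%:Z + m%:Z == -1) = false by lia.
  have -> : dX k i 0 (- i%:Z + m%:Z) = epsA k by rewrite /dX /inX; case: ifP => //; lia.
  have -> : - i%:Z + m%:Z + 1 = - i%:Z + m.+1%:Z by lia.
  rewrite IH; last by lia.
  by rewrite !dX1 /= !(mulr0, mul0r, mulr1, add0r, addr0, oppr0) => ->.
have top : (h (-1)).1 = 0.
  have -> : (-1 : int) = - i%:Z + i.-1%:Z by lia.
  by apply: unit0; lia.
move: (He (-1)) => /(congr1 snd); rewrite /scaleM /eps_gen /= top (Hs 0); last first.
  by rewrite /inX; apply/negP; lia.
by rewrite !dX1 /= !(mulr0, mul0r, mulr1, add0r, addr0) => /eqP; rewrite subr_eq0 => /eqP.
Qed.

Section Functor.
Variables (k : fieldType) (F : FunType k).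
Hypothesis HF : good_functor k F.

Lemma F_shift_nat i a j b (f : int -> dual k) (m : nat) :
  (0 < i)%N -> (0 < j)%N -> is_chain k i a j b f ->
  homotopic k i (a + m%:Z) j (b + m%:Z) (F i (a + m%:Z) j (b + m%:Z) (shiftZ m%:Z f))
    (shiftZ m%:Z (F i a j b f)).
Proof.
case: HF => _ [_ [_ [_ [_ [Hsh _]]]]] Hi Hj Hf; elim: m => [|m IH].
  by rewrite !addr0 !shiftZ0; apply: htp_refl.
have succ : forall x : int, x + m.+1%:Z = x + m%:Z + 1 by move=> x; lia.
rewrite !succ (_ : m.+1%:Z = 1 + m%:Z) ?shiftZ_add; last by lia.
apply: htp_trans (Hsh _ _ _ _ _ Hi Hj (chain_shift m%:Z Hf)) _.
exact: htp_shift IH.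
Qed.

(* F commutes with every shift [z]: a negative shift is undone by a positive one. *)
Lemma F_shift i a j b (f : int -> dual k) (z : int) :
  (0 < i)%N -> (0 < j)%N -> is_chain k i a j b f ->
  homotopic k i (a + z) j (b + z) (F i (a + z) j (b + z) (shiftZ z f))
    (shiftZ z (F i a j b f)).
Proof.
move=> Hi Hj Hf; have [m [->|->]] : exists m : nat, z = m%:Z \/ z = - m%:Z.
- by exists `|z|%N; lia.
- exact: F_shift_nat.
have := F_shift_nat m Hi Hj (chain_shift (- m%:Z) Hf).
rewrite !subrK -shiftZ_add subrr shiftZ0 => /(htp_shift (- m%:Z)).
by rewrite -shiftZ_add addNr shiftZ0; apply: htp_sym.
Qed.

Lemma F_comp_scale i j l a b (f g gen : int -> dual k) c1 c2 :
  (0 < i)%N -> (0 < j)%N -> (0 < l)%N ->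
  is_chain k i 0 j a f -> is_chain k j 0 l b g ->
  compM (shiftZ a g) f = gen ->
  homotopic k i 0 j a (F i 0 j a f) (scaleM c1 f) ->
  homotopic k j 0 l b (F j 0 l b g) (scaleM c2 g) ->
  homotopic k i 0 l (a + b) (F i 0 l (a + b) gen) (scaleM (c2 * c1) gen).
Proof.
move=> Hi Hj Hl Hf Hg Egen H1 H2.
have [Hch [_ [_ [_ [Hcomp _]]]]] := HF.
have Hga := chain_shift a Hg.
have Hcga := chain_shift a (chain_scale c2 Hg).
have T1 := F_shift a Hj Hl Hg.
have T2 := htp_shift a H2.
rewrite add0r (addrC b) in Hga Hcga T1 T2.
have := Hcomp _ _ _ _ _ _ _ _ Hi Hj Hl Hf Hga; rewrite Egen => Hc.
apply: htp_trans Hc _.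
apply: htp_trans (htp_compr (Hch _ _ _ _ _ Hi Hj Hf) T1) _.
apply: htp_trans (htp_compr (Hch _ _ _ _ _ Hi Hj Hf) T2) _.
apply: htp_trans (htp_compl Hcga H1) _.
rewrite (_ : compM _ _ = scaleM (c2 * c1) gen); first exact: htp_refl.
apply: functional_extensionality => n; rewrite -Egen /compM /shiftZ /scaleM.
by rewrite mulAZl mulAZr scaleAA.
Qed.

Variable kc : nat -> nat -> int -> k.
Hypothesis Hkc : coeffs_of k F kc.

Lemma kc_comp_one i j l a b :
  (0 < i)%N -> (0 < j)%N -> (0 < l)%N ->
  one_range i j a -> one_range j l b -> one_range i l (a + b) ->
  ~ (i = j /\ a = 0) -> ~ (j = l /\ b = 0) -> ~ (i = l /\ a + b = 0) ->
  kc i l (a + b) = kc j l b * kc i j a.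
Proof.
move=> Hi Hj Hl R1 R2 R3 N1 N2 N3; case: Hkc => Hone _.
apply: (one_gen_scale_inj Hi Hl R3); apply: htp_trans (htp_sym (Hone _ _ _ Hi Hl R3 N3)) _.
exact: F_comp_scale Hi Hj Hl (chain_one k Hi Hj R1) (chain_one k Hj Hl R2)
  (comp_one_one k Hi Hj Hl R1 R2 R3) (Hone _ _ _ Hi Hj R1 N1) (Hone _ _ _ Hj Hl R2 N2).
Qed.

Lemma kc_comp_eps i j a :
  (0 < i)%N -> (0 < j)%N -> eps_range i j a -> ~ (j = i /\ - a = 0) ->
  kc i i 0 = kc j i (- a) * kc i j a.
Proof.
move=> Hi Hj R N; case: Hkc => Hone Heps.
have R' : one_range j i (- a) by move: R; rewrite /eps_range /one_range; lia.
have R0 : eps_range i i 0 by rewrite /eps_range; lia.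
apply: (eps_gen_scale_inj Hi); apply: htp_trans (htp_sym (Heps _ _ _ Hi Hi R0)) _.
have := F_comp_scale Hi Hj Hi (chain_eps k Hi Hj R) (chain_one k Hj Hi R')
  (comp_one_eps k Hi Hj R) (Heps _ _ _ Hi Hj R) (Hone _ _ _ Hj Hi R' N).
by rewrite subrr.
Qed.

Hypothesis C1 : forall i : nat, (1 <= i)%N -> kc i i 0 = 1.
Hypothesis C2 : forall i : nat, (2 <= i)%N -> kc i.-1 i 0 = 1.

Local Notation lambda := (kc 2%N 1%N 1).

(* (C2) propagates along 1^i_{j[0]} = 1^{j-1}_{j[0]} o 1^i_{j-1[0]}. *)
Lemma kc_up i j : (1 <= i)%N -> (i < j)%N -> kc i j 0 = 1.
Proof.
move=> Hi; elim: j => // j IH; rewrite ltnS leq_eqVlt => /orP [/eqP <-|Hij].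
  exact: (C2 (i := i.+1)).
rewrite -[0 : int]addr0 (@kc_comp_one i j j.+1 0 0) ?IH ?(C2 (i := j.+1)) ?mulr1 //;
  rewrite /one_range; lia.
Qed.

(* All maps 1^{d+2}_{d+1[1]} have coefficient lambda: both factorizations
   1^{d+2}_{d+2[1]} = 1^{d+3}_{d+2[1]} o 1^{d+2}_{d+3[0]}
                    = 1^{d+1}_{d+2[0]} o 1^{d+2}_{d+1[1]}  give the same value. *)
Lemma kc_down d : kc d.+2 d.+1 1 = lambda.
Proof.
elim: d => // d IH.
have E1 := @kc_comp_one d.+2 d.+3 d.+2 0 1.
have E2 := @kc_comp_one d.+2 d.+1 d.+2 1 0.
rewrite add0r kc_up // mulr1 in E1; rewrite addr0 kc_up // mul1r IH in E2.
by rewrite -E1 ?E2 //; rewrite /one_range; lia.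
Qed.

(* On the one-range, k^i_{j[m]} = lambda^m, by peeling off 1^i_{i-1[1]}. *)
Lemma kc_one_nat (m i j : nat) : (1 <= i)%N -> (1 <= j)%N ->
  one_range i j m%:Z -> kc i j m%:Z = lambda ^+ m.
Proof.
elim: m i j => [|m IH] i j Hi Hj R.
  have [<-|Hij] := eqVneq i j; first exact: C1.
  by rewrite kc_up //; move: R Hij; rewrite /one_range; lia.
have [d Ei] : exists d, i = d.+2 by exists i.-2; move: R; rewrite /one_range; lia.
subst i.
have [/andP [/eqP -> /eqP ->]|N2] := boolP ((m == 0%N) && (j == d.+1)).
  by rewrite kc_down expr1.
have R2 : one_range d.+1 j m by move: R; rewrite /one_range; lia.
rewrite (_ : m.+1%:Z = 1 + m%:Z); last by lia.
rewrite (@kc_comp_one d.+2 d.+1 j 1 m) // ?IH ?kc_down -?exprSr //;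
  move: R N2; rewrite /one_range; lia.
Qed.

Lemma kc_one_range i j a : (1 <= i)%N -> (1 <= j)%N ->
  one_range i j a -> kc i j a = lambda ^ a.
Proof.
move=> Hi Hj R; have [m Ea] : exists m : nat, a = m%:Z.
  by exists `|a|%N; move: R; rewrite /one_range; lia.
by subst a; rewrite kc_one_nat.
Qed.

(* On the eps-range, 1 = k^j_{i[m]} k^i_{j[-m]} = lambda^m k^i_{j[-m]}. *)
Lemma kc_eps_range i j a : (1 <= i)%N -> (1 <= j)%N ->
  eps_range i j a -> kc i j a = lambda ^ a.
Proof.
move=> Hi Hj R; have [/andP [/eqP <- /eqP ->]|N] := boolP ((i == j) && (a == 0)).
  by rewrite C1 // expr0z.
have [m Ea] : exists m : nat, a = - m%:Z.
  by exists `|a|%N; move: R; rewrite /eps_range; lia.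
subst a.
have R' : one_range j i m by move: R; rewrite /eps_range /one_range; lia.
have N' : ~ (j = i /\ - - m%:Z = 0) by move: N; lia.
have := @kc_comp_eps i j (- m%:Z) Hi Hj R N'; rewrite opprK C1 // kc_one_nat // => E.
by rewrite -exprnN; apply/esym/mulr1_eq; rewrite -E.
Qed.

End Functor.

Theorem theorem5p10 (k : fieldType) (F : FunType k) (kc : nat -> nat -> int -> k)
    (HF : good_functor k F) (Hkc : coeffs_of k F kc)
    (C1 : forall i : nat, (1 <= i)%N -> kc i i 0 = 1)
    (C2 : forall i : nat, (2 <= i)%N -> kc i.-1 i 0 = 1) :
  forall (i j : nat) (a : int), (1 <= i)%N -> (1 <= j)%N ->
    eps_range i j a || one_range i j a ->
    kc i j a = (kc 2%N 1%N 1) ^ a.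
Proof.
move=> i j a Hi Hj /orP [R|R].
- exact: (kc_eps_range HF Hkc C1 C2).
- exact: (kc_one_range HF Hkc C1 C2).
Qed.
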